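(* The ordinal space $\omega_1+1$ (with the order topology) is not self-selective; that is, there is a lower semicontinuous map $\varphi$ from $\omega_1+1$ to the nonempty closed subsets of $\omega_1+1$ that has no continuous selection.
   Context: For spaces $Y$, $X$, a map $\varphi:Y\to\mathcal P(X)\setminus\{\emptyset\}$ is lower semicontinuous if $\{y:\varphi(y)\cap U\neq\emptyset\}$ is open in $Y$ for every open $U\subseteq X$; a selection is a map $f:Y\to X$ with $f(y)\in\varphi(y)$ for all $y$. A space $X$ is self-selective if every lower semicontinuous map from $X$ to the nonempty closed subsets of $X$ has a continuous selection. *)

From HB Require Import structures.
From mathcomp Require Import all_boot all_order all_algebra.
From mathcomp Require Import all_classical all_reals all_analysis.
Set Implicit Arguments. Unset Strict Implicit. Unset Printing Implicit Defensive.
Import Order.TTheory.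
Local Open Scope classical_set_scope.

Definition lower_semicontinuous (Y X : topologicalType) (phi : Y -> set X) : Prop :=
  forall U : set X, open U -> open [set y | phi y `&` U !=set0].

Definition is_selection (Y X : Type) (phi : Y -> set X) (f : Y -> X) : Prop :=
  forall y, phi y (f y).

Definition self_selective (X : topologicalType) : Prop :=
  forall phi : X -> set X,
    (forall x, phi x !=set0 /\ closed (phi x)) ->
    lower_semicontinuous phi ->
    exists f : X -> X, continuous f /\ is_selection phi f.

Definition is_omega1_plus_1 (d : Order.disp_t) (T : orderType d) : Prop :=
  (forall A : set T, A !=set0 -> exists2 m, A m & forall x, A x -> (m <= x)%O) /\
  exists top : T,
    (forall x, (x <= top)%O) /\
    ~ countable [set x | (x < top)%O] /\
    (forall y, (y < top)%O -> countable [set x | (x < y)%O]).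

(* Below a limit [l < omega_1] the next limit [y] is approached by the
   omega-sequence of isolated points of [(l, y)].  Put [phi y = {l}] and, for
   [w] in [(l, y)], [phi w = {w, p_w}] with [p_w < l] converging to [l] as [w]
   tends to [y]; at limits of limits [phi] is the identity.  A continuous selection [f] fixes [omega_1], so closing off
   under a modulus of continuity at [omega_1] yields a limit [l] with [f >= l]
   on [(l, omega_1]].  Then [f y = l], and by continuity [f w <= l], hence
   [f w = l], for [w < y] close to [y]; but [l] is not in [phi w]. *)

From Pilot Require Import Defs.
From HB Require Import structures.
From mathcomp Require Import all_boot all_order all_algebra.
From mathcomp Require Import all_classical all_reals all_analysis.
Set Implicit Arguments. Unset Strict Implicit. Unset Printing Implicit Defensive.
Import Order.TTheory.
Local Open Scope order_scope.
Local Open Scope classical_set_scope.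

Lemma countable_setU (U : Type) (A B : set U) :
  countable A -> countable B -> countable (A `|` B).
Proof.
move=> cA cB; have -> : A `|` B = \bigcup_(i in [set: bool]) (if i then A else B).
  by apply/seteqP; split=> [x [] ?|x [[] _ ?]]; by [exists true|exists false|left|right].
by apply: bigcup_countable => // -[].
Qed.

Section TotalOrder.
Context {d : Order.disp_t} {T : orderType d}.
Implicit Types (a b l w y z : T) (c : T -> nat).

Definition is_limit y :=
  (exists a, a < y) /\ forall a, a < y -> exists2 z, a < z & z < y.

Definition last_limit_before l y :=
  [/\ is_limit l, l < y & forall w, l < w < y -> ~ is_limit w].

Lemma last_limit_before_unique l l' y :
  last_limit_before l y -> last_limit_before l' y -> l = l'.
Proof.
move=> [ll ly lH] [ll' l'y l'H]; apply/eqP; rewrite eq_le !leNgt.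
by apply/andP; split; apply/negP => cmp; [apply: (l'H l) | apply: (lH l')]; rewrite ?cmp.
Qed.

Lemma bounded_small_codes c a l : a < l ->
    {in [set z | z < l] &, injective c} ->
  forall M, exists2 p, p < l & forall z, z < l -> (c z < M)%N -> z <= p.
Proof.
move=> al c_inj; elim=> [|M [p pl pH]]; first by exists a.
have [[z0 [z0l cz0]]|nz] := pselect (exists z0, z0 < l /\ c z0 = M); last first.
  exists p => // z zl; rewrite ltnS leq_eqVlt => /orP[/eqP czM|]; last exact: pH.
  by exfalso; apply: nz; exists z.
exists (Order.max p z0); first by rewrite gt_max pl.
move=> z zl; rewrite le_max ltnS leq_eqVlt => /orP[/eqP czM|/(pH z zl) -> //].
by rewrite (c_inj z z0) ?lexx ?orbT ?czM ?inE.
Qed.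

Lemma eventually_large_codes c l y : l < y ->
    {in [set z | z < y] &, injective c} ->
  forall k, exists2 b, l <= b < y & forall w, b < w < y -> (k <= c w)%N.
Proof.
move=> ly c_inj; elim=> [|k [b /andP[lb bY] bH]]; first by exists l; rewrite ?lexx ?ly.
have [[w0 /and3P[bw0 w0y /eqP cw0]]|nw] :=
  pselect (exists w0, [&& b < w0, w0 < y & c w0 == k]).
  exists w0 => [|w /andP[w0w wy]]; first by rewrite w0y (le_trans lb (ltW bw0)).
  rewrite ltn_neqAle bH ?(lt_trans bw0 w0w) ?wy // andbT; apply/eqP => kcw.
  by move: w0w; rewrite (c_inj w w0) ?ltxx ?inE ?cw0.
exists b => [|w /andP[bw wy]]; first by rewrite lb bY.
rewrite ltn_neqAle bH ?bw ?wy // andbT; apply/eqP => kcw.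
by apply: nw; exists w; rewrite bw wy kcw eqxx.
Qed.

(* [prev_limit y = y] when no limit is last below [y], e.g. at limits of
   limits. *)
Definition prev_limit y : T := xget y (last_limit_before^~ y).

Definition next_limit l : T := xget l [set y | is_limit y /\ last_limit_before l y].

Lemma prev_limitE l y : last_limit_before l y -> prev_limit y = l.
Proof. by move=> lly; apply: xget_unique => // l' /last_limit_before_unique; apply. Qed.

Lemma prev_limit_le y : prev_limit y <= y.
Proof. by rewrite /prev_limit; case: xgetP => [l -> [_ /ltW]|_]. Qed.

Lemma prev_limit_lt y : prev_limit y < y -> last_limit_before (prev_limit y) y.
Proof. by rewrite /prev_limit; case: xgetP => // _; rewrite ltxx. Qed.

Lemma prev_limit_ge l y : is_limit l -> l < y -> l <= prev_limit y.
Proof.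
move=> ll ly; rewrite /prev_limit; case: xgetP => [l' -> [_ l'y noLim]|_]; last exact: ltW.
by rewrite leNgt; apply/negP => l'l; apply: (noLim l); rewrite ?l'l.
Qed.

Lemma next_limitE l y : is_limit y -> last_limit_before l y -> next_limit l = y.
Proof.
move=> ly [ll lty noLim]; apply: xget_unique => // y' [ly' [_ lty' noLim']].
apply/eqP; rewrite eq_le !leNgt; apply/andP; split; apply/negP => cmp.
  by apply: (noLim' y); rewrite ?lty ?cmp.
by apply: (noLim y'); rewrite ?lty' ?cmp.
Qed.

Lemma last_limit_before_between l y w :
  last_limit_before l y -> l < w < y -> last_limit_before l w.
Proof.
move=> [ll _ noLim] /andP[lw wy]; split=> // v /andP[lv vw].
by apply: noLim; rewrite lv (lt_trans vw wy).
Qed.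

Lemma prev_limit_eventually_gt a y : a < y ->
  exists2 b, a <= b < y & forall w, is_limit w -> b < w < y -> a < prev_limit w.
Proof.
move=> ay; have [[a' [aa' a'y la']]|none] :=
  pselect (exists a', [/\ a < a', a' < y & is_limit a']).
  exists a' => [|w _ /andP[a'w _]]; first by rewrite (ltW aa') a'y.
  exact: lt_le_trans aa' (prev_limit_ge la' a'w).
exists a => [|w lw /andP[aw wy]]; first by rewrite lexx ay.
by exfalso; apply: none; exists w.
Qed.

End TotalOrder.

Section OrderTopology.
Context {d : Order.disp_t} {T : orderTopologicalType d}.
Implicit Types (a b x y z : T) (U : set T).

Lemma open_lt b : open [set z | z < b].
Proof. by rewrite -set_itvNyo; exact: lray_open. Qed.

Lemma open_gt b : open [set z | b < z].
Proof. by rewrite -set_itvoy; exact: rray_open. Qed.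

Lemma nbhs_left_interval x U a0 : nbhs x U -> a0 < x ->
  exists2 a, a < x & forall z, a < z <= x -> U z.
Proof.
rewrite itv_nbhsE => -[[l r] [oi xi] iU] a0x.
move: oi xi iU; case: l => [[] t|[]]; case: r => [[] u|[]] //= _.
- rewrite in_itv /= => /andP[tx xu] iU; exists t => // z /andP[tz zx]; apply: iU.
  by rewrite /= in_itv /= tz (le_lt_trans zx xu).
- rewrite in_itv /= andbT => tx iU; exists t => // z /andP[tz _]; apply: iU.
  by rewrite /= in_itv /= tz.
- rewrite in_itv /= => xu iU; exists a0 => // z /andP[_ zx]; apply: iU.
  by rewrite /= in_itv /= (le_lt_trans zx xu).
- by move=> _ iU; exists a0 => // z _; apply: iU; rewrite /= in_itv.
Qed.

Section WellOrdered.
Hypothesis wo : forall A : set T, A !=set0 -> exists2 m, A m & forall x, A x -> m <= x.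

Lemma open_le y : open [set z | z <= y].
Proof.
have [[s ys] | noabove] := pselect (exists s, y < s); last first.
  suff -> : [set z | z <= y] = setT by exact: openT.
  apply/seteqP; split=> // z _ /=; rewrite leNgt; apply/negP => yz.
  by apply: noabove; exists z.
have [s' ys' s'min] := wo (ex_intro _ s ys : [set z | y < z] !=set0).
suff -> : [set z | z <= y] = [set z | z < s'] by exact: open_lt.
apply/seteqP; split=> z /=; first by move=> zy; exact: le_lt_trans ys'.
by move=> zs'; rewrite leNgt; apply/negP => /s'min; rewrite leNgt zs'.
Qed.

Lemma open_itvoc b y : open [set z | b < z <= y].
Proof.
suff -> : [set z | b < z <= y] = [set z | b < z] `&` [set z | z <= y].
  by apply: openI; [exact: open_gt | exact: open_le].
by apply/seteqP; split=> z /=; [move=> /andP[] | move=> [-> ->]].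
Qed.

Lemma open_nonlimit y : ~ is_limit y -> open [set y].
Proof.
move=> ly; have [[a0 a0y] | nobelow] := pselect (exists a, a < y); last first.
  suff -> : [set y] = [set z | z <= y] by exact: open_le.
  apply/seteqP; split=> [z -> /=|z /=]; first exact: lexx.
  rewrite le_eqVlt => /orP[/eqP -> //|zy].
  by exfalso; apply: nobelow; exists z.
have [a ay gap] : exists2 a, a < y & forall z, ~ (a < z /\ z < y).
  apply: contrapT => H; apply: ly; split; first by exists a0.
  move=> a ay; apply: contrapT => Hz; apply: H; exists a => // z [az zy].
  by apply: Hz; exists z.
suff -> : [set y] = [set z | a < z <= y] by exact: open_itvoc.
apply/seteqP; split=> [z -> /=|z /= /andP[az]]; first by rewrite ay lexx.
by rewrite le_eqVlt => /orP[/eqP -> //|zy]; exfalso; apply: (gap z).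
Qed.

Section Omega1.
Variable top : T.
Hypothesis le_top : forall x, x <= top.
Hypothesis uncountable_below_top : ~ countable [set x | x < top].
Hypothesis countable_below : forall y, y < top -> countable [set x | x < y].

Lemma top_is_limit : is_limit top.
Proof.
split.
  apply: contrapT => nobelow; apply: uncountable_below_top.
  rewrite (_ : [set x | x < top] = set0) //.
  by apply/seteqP; split=> // x xt; apply: nobelow; exists x.
move=> a atop; apply: contrapT => nogap; apply: uncountable_below_top.
apply: (sub_countable (B := [set x | x < a] `|` [set a])); last first.
  by apply: countable_setU; [exact: countable_below | exact: countable1].
apply: subset_card_le => x /= xt; have [xa|ax] := leP x a.
  by move: xa; rewrite le_eqVlt => /orP[/eqP ->|]; [right|left].
by exfalso; apply: nogap; exists x.
Qed.

Lemma increasing_seq_sup (s : nat -> T) :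
    (forall n, s n < s n.+1) -> (forall n, s n < top) ->
  exists l, [/\ l < top, is_limit l, forall n, s n < l
                & forall z, z < l -> exists n, z < s n].
Proof.
move=> s_incr s_top.
have [l ub lmin] := wo (ex_intro _ top (fun n => ltW (s_top n)) :
  [set u | forall n, s n <= u] !=set0).
have cofinal z : z < l -> exists n, z < s n.
  move=> zl; apply: contrapT => nolarger; move: zl; rewrite ltNge => /negP; apply.
  by apply: lmin => n; rewrite leNgt; apply/negP => zs; apply: nolarger; exists n.
have sl n : s n < l by apply: lt_le_trans (s_incr n) (ub n.+1).
exists l; split => //.
- rewrite lt_neqAle le_top andbT; apply/negP => /eqP l_top; apply: uncountable_below_top.
  apply: (sub_countable (B := \bigcup_(n in [set: nat]) [set x | x < s n])); last first.
    by apply: bigcup_countable => // n _; exact: countable_below.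
  by apply: subset_card_le => x /=; rewrite -l_top => /cofinal[n xn]; exists n.
- split; first by exists (s 0).
  by move=> a /cofinal[n an]; exists (s n).
Qed.

Lemma exists_limit_closed (g : T -> T) x : x < top ->
    (forall u, u < top -> g u < top) ->
  exists l, [/\ x < l, l < top, is_limit l
              & forall z, z < l -> exists2 u, z <= u < l & g u < l].
Proof.
move=> xt g_top.
have [nx nxP] : {nx : T -> T & forall u, u < top -> u < nx u < top}.
  apply: (@choice _ _ (fun u v => u < top -> u < v < top)) => u.
  have [ut|nut] := pselect (u < top); last by exists u => /nut.
  by have [_ /(_ u ut)[z uz zt]] := top_is_limit; exists z => _; rewrite uz zt.
pose step u := nx (Order.max u (g u)).
have step_gt u : u < top -> Order.max u (g u) < step u < top.
  by move=> ut; apply: nxP; rewrite gt_max ut g_top.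
pose s n := iter n step x.
have s_top n : s n < top.
  by elim: n => [|n IH] //; rewrite /s iterS; case/andP: (step_gt _ IH).
have s_step n : Order.max (s n) (g (s n)) < s n.+1.
  by rewrite /s iterS; case/andP: (step_gt _ (s_top n)).
have s_incr n : s n < s n.+1 by move: (s_step n); rewrite gt_max => /andP[].
have [l [ltop ll sl cofinal]] := increasing_seq_sup s_incr s_top.
exists l; split => //; first exact: (lt_trans (s_incr 0) (sl 1%N)).
move=> z /cofinal[n zn]; exists (s n); first by rewrite (ltW zn) sl.
by move: (s_step n); rewrite gt_max => /andP[_ /lt_trans]; apply.
Qed.

Lemma next_limitP l : is_limit l -> l < top ->
  [/\ is_limit (next_limit l), last_limit_before l (next_limit l) & next_limit l < top].
Proof.
move=> ll ltop.
have [mu [lmu mut lmu' _]] := exists_limit_closed (g := id) ltop (fun _ => id).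
have [y [ly yl] ymin] :=
  wo (ex_intro _ mu (conj lmu lmu') : [set z | l < z /\ is_limit z] !=set0).
have lly : last_limit_before l y.
  split=> // w /andP[lw wy] lw'; have := ymin w (conj lw lw').
  by rewrite leNgt wy.
rewrite (next_limitE yl lly); split=> //.
exact: le_lt_trans (ymin mu (conj lmu lmu')) mut.
Qed.

Lemma prev_limit_top : prev_limit top = top.
Proof.
have := prev_limit_le top; rewrite le_eqVlt
  => /orP[/eqP // | /prev_limit_lt [_ ltop noLim]].
have [mu [lmu mut lmu' _]] := exists_limit_closed (g := id) ltop (fun _ => id).
by exfalso; apply: (noLim mu); rewrite ?lmu ?mut.
Qed.

Lemma continuous_top_limit_lower_bound (f : T -> T) :
    f top = top -> {for top, continuous f} ->
  exists l, [/\ l < top, is_limit l & forall a, l < a -> l <= f a].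
Proof.
move=> ftop fc.
have [G GP] :
    {G : T -> T & forall b, b < top -> G b < top /\ forall a, G b < a -> b < f a}.
  apply: (@choice _ _ (fun b g => b < top -> g < top /\ forall a, g < a -> b < f a)) => b.
  have [bt|nbt] := pselect (b < top); last by exists b => /nbt.
  have nb : nbhs top (f @^-1` [set z | b < z]).
    by apply: fc; rewrite ftop; apply: open_nbhs_nbhs; split => //; exact: open_gt.
  have [g gt gH] := nbhs_left_interval nb bt.
  by exists g => _; split => // a ga; apply: gH; rewrite ga le_top.
have [[a0 a0t] _] := top_is_limit.
have [l [_ ltop ll closed]] := exists_limit_closed a0t (fun b bt => (GP b bt).1).
exists l; split=> // a la; rewrite leNgt; apply/negP => /closed[u /andP[fau ul] Gul].
have := (GP u (lt_trans ul ltop)).2 a (lt_trans Gul la).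
by rewrite ltNge fau.
Qed.

Lemma exists_next_limit_codes : {code : T -> T -> nat & forall l, is_limit l -> l < top ->
  {in [set z | z < next_limit l] &, injective (code l)}}.
Proof.
apply: (@choice _ _ (fun l c => is_limit l -> l < top ->
  {in [set z | z < next_limit l] &, injective c})) => l.
have [[ll ltop]|nl] := pselect (is_limit l /\ l < top); last first.
  by exists (fun=> 0%N) => ll ltop; exfalso; apply: nl.
have [_ _ /countable_below /countable_injP[c c_inj]] := next_limitP ll ltop.
by exists c.
Qed.

Section Counterexample.
Variable code : T -> T -> nat.
Hypothesis code_inj : forall l, is_limit l -> l < top ->
  {in [set z | z < next_limit l] &, injective (code l)}.

(* As [w] runs through the omega-block [(l, next_limit l)], its code tends to
   infinity, so [cofinal_point l w] converges to [l] from below. *)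
Definition cofinal_point l w : T :=
  xget l [set p | p < l /\ forall z, z < l -> (code l z <= code l w)%N -> z <= p].

Lemma cofinal_pointP l w : is_limit l -> l < top ->
  cofinal_point l w < l /\
  forall z, z < l -> (code l z <= code l w)%N -> z <= cofinal_point l w.
Proof.
move=> ll ltop; have [[a al] _] := ll.
apply: (@xgetPex _ l
  [set p | p < l /\ forall z, z < l -> (code l z <= code l w)%N -> z <= p]).
have [_ [_ l_nl _] _] := next_limitP ll ltop.
have inj : {in [set z | z < l] &, injective (code l)}.
  move=> x y; rewrite !inE /= => xl yl; apply: code_inj => //; rewrite inE /=.
    exact: lt_trans xl l_nl.
  exact: lt_trans yl l_nl.
by have [p pl pH] := bounded_small_codes al inj (code l w).+1; exists p.
Qed.

Definition phi y : set T :=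
  if `[< is_limit y >] then [set prev_limit y]
  else [set y; cofinal_point (prev_limit y) y].

Lemma phi_limit y : is_limit y -> phi y = [set prev_limit y].
Proof. by move=> ly; rewrite /phi asboolT. Qed.

Lemma phi_nonlimit y : ~ is_limit y -> phi y = [set y; cofinal_point (prev_limit y) y].
Proof. by move=> ly; rewrite /phi asboolF. Qed.

Lemma phi_nonempty_closed y : phi y !=set0 /\ closed (phi y).
Proof.
have closed1 (x : T) : closed [set x].
  exact: accessible_closed_set1 (hausdorff_accessible order_hausdorff) x.
rewrite /phi; case: ifP => _; first by split; [eexists | exact: closed1].
by split; [exists y; left | apply: closedU].
Qed.

Lemma phi_hits_near_fixed U y : open U -> U y -> is_limit y -> prev_limit y = y ->
  nbhs y [set z | phi z `&` U !=set0].
Proof.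
move=> oU Uy ly py; have [[a0 a0y] _] := ly.
have [a ay aU] := nbhs_left_interval (open_nbhs_nbhs (conj oU Uy)) a0y.
have [b /andP[ab bY] bH] := prev_limit_eventually_gt ay.
have nbW : nbhs y [set z | b < z <= y].
  by apply: open_nbhs_nbhs; split; [exact: open_itvoc | rewrite /= bY lexx].
apply: (filterS _ nbW) => z /andP[bz zy] /=; have az : a < z := le_lt_trans ab bz.
have [lz|nlz] := pselect (is_limit z); last first.
  by rewrite phi_nonlimit //; exists z; split; [left | apply: aU; rewrite az zy].
rewrite phi_limit //; exists (prev_limit z); split => //.
move: zy; rewrite le_eqVlt => /orP[/eqP ->|zy]; first by rewrite py.
by apply: aU; rewrite bH ?bz ?zy // (le_trans (prev_limit_le z) (ltW zy)).
Qed.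

Lemma phi_hits_near_gap U y : open U -> is_limit y -> prev_limit y < y ->
  U (prev_limit y) -> nbhs y [set z | phi z `&` U !=set0].
Proof.
move=> oU ly lty Ul; have lly := prev_limit_lt lty.
set l := prev_limit y in lty lly Ul *.
have [ll _ _] := lly; have ltop : l < top := lt_le_trans lty (le_top y).
have [[a0 a0l] l_lim] := ll.
have [a al aU] := nbhs_left_interval (open_nbhs_nbhs (conj oU Ul)) a0l.
have [z0 az0 z0l] := l_lim a al.
have inj : {in [set z | z < y] &, injective (code l)}.
  by rewrite -(next_limitE ly lly); exact: code_inj.
have [b /andP[lb bY] bH] := eventually_large_codes lty inj (code l z0).
have nbW : nbhs y [set z | b < z <= y].
  by apply: open_nbhs_nbhs; split; [exact: open_itvoc | rewrite /= bY lexx].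
apply: (filterS _ nbW) => z /andP[bz] /=; rewrite le_eqVlt => /orP[/eqP ->|zy].
  by rewrite phi_limit //; exists l.
have lz : l < z := le_lt_trans lb bz.
have llz : last_limit_before l z by apply: last_limit_before_between lly _; rewrite lz zy.
have [_ _ noLim] := lly.
rewrite phi_nonlimit; last by apply: noLim; rewrite lz zy.
rewrite (prev_limitE llz); have [cl cH] := cofinal_pointP z ll ltop.
exists (cofinal_point l z); split; first by right.
apply: aU; rewrite (ltW cl) andbT; apply: lt_le_trans az0 (cH z0 z0l _).
by apply: bH; rewrite bz zy.
Qed.

Lemma phi_lsc : Defs.lower_semicontinuous phi.
Proof.
move=> U oU; rewrite openE => y [u [phiyu Uu]]; rewrite /interior.
have [ly|nly] := pselect (is_limit y); last first.
  have nbW : nbhs y [set y] by apply: open_nbhs_nbhs; split; [exact: open_nonlimit|].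
  by apply: (filterS _ nbW) => z ->; exists u.
move: phiyu; rewrite phi_limit // => /= uy; rewrite uy in Uu.
have := prev_limit_le y; rewrite le_eqVlt => /orP[/eqP py|lty].
  by apply: phi_hits_near_fixed => //; rewrite -py.
exact: phi_hits_near_gap.
Qed.

Lemma phi_no_continuous_selection f : continuous f -> ~ is_selection phi f.
Proof.
move=> fc fsel.
have ftop : f top = top.
  by have := fsel top; rewrite phi_limit ?prev_limit_top //; exact: top_is_limit.
have [l [ltop ll fl]] := continuous_top_limit_lower_bound ftop (fc top).
have [ly lly yt] := next_limitP ll ltop.
set y := next_limit l in ly lly yt; have [_ ly_gt noLim] := lly.
have fy : f y = l by have := fsel y; rewrite phi_limit // (prev_limitE lly).
have nb : nbhs y (f @^-1` [set z | z <= l]).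
  by apply: fc; rewrite fy; apply: open_nbhs_nbhs; split; [exact: open_le | rewrite /=].
have [a ay aH] := nbhs_left_interval nb ly_gt.
have [w aw wy] : exists2 w, Order.max a l < w & w < y.
  by apply: ly.2; rewrite gt_max ay ly_gt.
move: aw; rewrite gt_max => /andP[aw lw].
have fw : f w = l by apply/eqP; rewrite eq_le aH ?aw ?(ltW wy) // fl.
have llw : last_limit_before l w by apply: last_limit_before_between lly _; rewrite lw wy.
move: (fsel w); rewrite phi_nonlimit; last by apply: noLim; rewrite lw wy.
rewrite (prev_limitE llw) fw => -[wl|lc]; first by move: lw; rewrite wl ltxx.
by have [] := cofinal_pointP w ll ltop; rewrite -lc ltxx.
Qed.

End Counterexample.
End Omega1.
End WellOrdered.
End OrderTopology.

Theorem mainTheorem7 (d : Order.disp_t) (T : orderTopologicalType d) :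
  is_omega1_plus_1 T -> ~ self_selective T.
Proof.
move=> [wo [top [le_top [unc cnt]]]] selective.
have [code code_inj] := exists_next_limit_codes wo le_top unc cnt.
have [f [fc fsel]] :=
  selective _ (phi_nonempty_closed code) (phi_lsc wo le_top unc cnt code_inj).
exact: (phi_no_continuous_selection wo le_top unc cnt code_inj fc fsel).
Qed.
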